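(* Let $X$ be a Hausdorff hereditarily disconnected space. Then $\mathcal{K}(X)$ contains a connected set with more than one point if and only if there exist a closed subset $F\subset X$ and a compact subset $K\subsetneq F$ such that $K$ intersects every quasicomponent of $F$.
   Context: $\mathcal{K}(X)$ is the set of nonempty compact subsets of $X$ with the Vietoris topology (generated by $U^+=\{A: A\subset U\}$ and $U^-=\{A: A\cap U\neq\emptyset\}$ for $U$ open in $X$). A space is hereditarily disconnected if every nonempty connected subset is a singleton. The quasicomponent of a space $F$ at $p\in F$ is the intersection of all clopen subsets of $F$ containing $p$. *)

From HB Require Import structures.
From mathcomp Require Import all_boot all_order.
From mathcomp Require Import all_classical all_reals all_analysis.
Set Implicit Arguments. Unset Strict Implicit. Unset Printing Implicit Defensive.
Local Open Scope classical_set_scope.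

Definition hyperspace (X : topologicalType) : Type :=
  {A : set X | compact A /\ A !=set0}.

HB.instance Definition _ (X : topologicalType) :=
  gen_eqMixin (hyperspace X).
HB.instance Definition _ (X : topologicalType) :=
  gen_choiceMixin (hyperspace X).

(** Subbasic Vietoris sets: (true, U) gives U^+ = {A | A ⊆ U},
    (false, U) gives U^- = {A | A ∩ U ≠ ∅}, for U open in X. *)
Definition vietoris_subbase (X : topologicalType) (i : bool * set X)
  : set (hyperspace X) :=
  if i.1 then [set A | sval A `<=` i.2]
  else [set A | sval A `&` i.2 !=set0].

HB.instance Definition _ (X : topologicalType) :=
  @isSubBaseTopological.Build (hyperspace X) (bool * set X)%type
    [set i | open i.2] (@vietoris_subbase X).

Definition quasicomponent (X : topologicalType) (F : set X) (p : X) : set X :=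
  \bigcap_(C in [set C : set X | [/\ (exists2 U, open U & C = F `&` U),
                                     (exists2 V, closed V & C = F `&` V) &
                                     C p]]) C.

From HB Require Import structures.
From mathcomp Require Import all_boot all_order.
From mathcomp Require Import all_classical all_reals all_analysis.
From mathcomp Require Import finmap.

(* If C is a connected subset of K(X) with two members, let F be the closure of
   their union; a member K <> F meets every quasicomponent of F: otherwise
   compactness of K yields a set Q clopen in F containing a point of F and
   missing K, and the members of C meeting Q form a proper nonempty clopen
   subset of C.  Conversely, x |-> K u {x} is continuous and constant on K; a
   clopen subset of F is a union of quasicomponents, each of which meets K,
   so the image of F is connected, and it contains K and K u {p}, p in F \ K. *)

Set Implicit Arguments.
Unset Strict Implicit.
Unset Printing Implicit Defensive.

Local Open Scope classical_set_scope.

Section Vietoris.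
Variable X : topologicalType.
Implicit Types U : set X.

Definition vietoris_upper U : set (hyperspace X) := [set A | proj1_sig A `<=` U].
Definition vietoris_lower U : set (hyperspace X) := [set A | proj1_sig A `&` U !=set0].

Lemma hyperspace_ext (A B : hyperspace X) : proj1_sig A = proj1_sig B -> A = B.
Proof. by apply: eq_sig_hprop => *; exact: Prop_irrelevance. Qed.

Lemma open_vietoris_subbase (i : bool * set X) : open i.2 ->
  open (vietoris_subbase i).
Proof.
move=> oi; exists [set vietoris_subbase i]; last by rewrite bigcup_set1.
move=> _ ->; exists (fset1 i); last by rewrite set_fset1 bigcap_set1.
by move=> j; rewrite !inE => /eqP ->; exact/mem_set.
Qed.

Lemma open_vietoris_upper U : open U -> open (vietoris_upper U).
Proof. exact: (@open_vietoris_subbase (true, U)). Qed.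

Lemma open_vietoris_lower U : open U -> open (vietoris_lower U).
Proof. exact: (@open_vietoris_subbase (false, U)). Qed.

Lemma continuous_to_hyperspace (T : topologicalType) (f : T -> hyperspace X) :
  (forall U, open U -> open (f @^-1` vietoris_upper U)) ->
  (forall U, open U -> open (f @^-1` vietoris_lower U)) -> continuous f.
Proof.
move=> fU fL; apply/continuousP => _ [S sS <-].
rewrite preimage_bigcup; apply: bigcup_open => _ /sS [I Isub <-].
rewrite bigcap_fset big_seq; apply: (big_ind (fun A => open (f @^-1` A))).
- by rewrite preimage_setT; exact: openT.
- by move=> ? ? ? ?; rewrite preimage_setI; exact: openI.
- by move=> [[] U] /Isub /set_mem /= oU; [exact: fU | exact: fL].
Qed.

End Vietoris.

Section Quasicomponents.
Variable X : topologicalType.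
Implicit Types F P M : set X.

Definition rel_clopen F P :=
  (exists2 U, open U & P = F `&` U) /\ (exists2 V, closed V & P = F `&` V).

Lemma quasicomponentP F p x :
  quasicomponent F p x <-> forall P, rel_clopen F P -> P p -> P x.
Proof.
by split=> [qx P [oP cP] Pp | h P [oP cP Pp]]; [exact: qx | exact: h].
Qed.

Lemma rel_clopenT F : rel_clopen F F.
Proof.
split; (exists setT; last by rewrite setIT); [exact: openT | exact: closedT].
Qed.

Lemma rel_clopenI F P Q : rel_clopen F P -> rel_clopen F Q ->
  rel_clopen F (P `&` Q).
Proof.
move=> [[U1 oU1 ->] [V1 cV1 eV1]] [[U2 oU2 ->] [V2 cV2 eV2]]; split.
- by exists (U1 `&` U2); [exact: openI | rewrite setIACA setIid].
- by exists (V1 `&` V2); [exact: closedI | rewrite eV1 eV2 setIACA setIid].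
Qed.

Lemma rel_clopenD F P : rel_clopen F P -> rel_clopen F (F `\` P).
Proof.
move=> [[U oU eU] [V cV eV]]; split.
- by exists (~` V); [exact: closed_openC | rewrite eV setDIr setDv set0U].
- by exists (~` U); [exact: open_closedC | rewrite eU setDIr setDv set0U].
Qed.

Lemma quasicomponent_sub F p : F p -> quasicomponent F p `<=` F.
Proof. by move=> Fp x /quasicomponentP; apply; first exact: rel_clopenT. Qed.

Lemma quasicomponent_rel_clopen F P p x : rel_clopen F P -> F p ->
  quasicomponent F p x -> (P p <-> P x).
Proof.
move=> FP Fp /quasicomponentP qx; split; first exact: qx.
move=> Px; apply: contrapT => nPp.
by have [] := qx _ (rel_clopenD FP) (conj Fp nPp).
Qed.

Lemma compact_meets_quasicomponent F M q : compact M -> M `<=` F -> F q ->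
  (forall P, rel_clopen F P -> P q -> M `&` P !=set0) ->
  M `&` quasicomponent F q !=set0.
Proof.
move=> cM MF Fq meet.
pose D := [set P | rel_clopen F P /\ P q].
have DI : forall P Q, D P -> D Q -> D (P `&` Q).
  by move=> P Q [FP Pq] [FQ Qq]; split; [exact: rel_clopenI|].
have fM : ProperFilter (filter_from D (fun P => M `&` P)).
  apply: filter_from_proper; last by move=> P [FP Pq]; exact: meet.
  apply: filter_from_filter; first by exists F; split; [exact: rel_clopenT|].
  by move=> P Q DP DQ; exists (P `&` Q); [exact: DI | rewrite setIACA setIid].
have [a [Ma cla]] : exists a, M a /\ cluster (filter_from D (setI M)) a.
  by apply: cM; exists F; [split; [exact: rel_clopenT|] | exact: subIsetl].
exists a; split => //; apply/quasicomponentP => P FP Pq.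
have [_ [V cV eV]] := FP.
suff Va : V a by rewrite eV; split => //; exact: MF.
apply: contrapT => nVa.
have MP : filter_from D (setI M) (M `&` P) by exists P.
have [y [[My Py] nVy]] :=
  cla _ (~` V) MP (open_nbhs_nbhs (conj (closed_openC cV) nVa)).
by apply: nVy; move: Py; rewrite eV => -[].
Qed.

End Quasicomponents.

Lemma connected_image_quasicomponents (X Y : topologicalType) (f : X -> Y)
    (F K : set X) :
  continuous f -> (forall k k', K k -> K k' -> f k = f k') ->
  (forall p, F p -> K `&` quasicomponent F p !=set0) -> connected (f @` F).
Proof.
move=> fC fK FK B [y By] [W oW BW] [D cD BD].
have [[z Fz zy] _] : (f @` F `&` W) y by rewrite -BW.
subst y.
have BfW x : F x -> B (f x) <-> W (f x).
  by move=> Fx; rewrite BW; split=> [[]|] //; split => //; exists x.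
have BfD x : F x -> B (f x) <-> D (f x).
  by move=> Fx; rewrite BD; split=> [[]|] //; split => //; exists x.
pose P := F `&` f @^-1` W.
have FP : rel_clopen F P.
  split; first by exists (f @^-1` W) => //; move/continuousP : fC; apply.
  exists (f @^-1` D); first by apply: preimage_closed => // ? _; exact: fC.
  apply/seteqP; split=> x [Fx fx]; split=> //.
    by apply/(BfD x Fx)/(BfW x Fx).
  by apply/(BfW x Fx)/(BfD x Fx).
have PK x : F x -> exists2 k, K k /\ F k & (P x <-> P k).
  move=> Fx; have [k [Kk Qk]] := FK x Fx.
  exists k; last exact: quasicomponent_rel_clopen FP Fx Qk.
  by split=> //; apply: (quasicomponent_sub Fx).
have [k0 [Kk0 _] [_ Ok0]] : exists2 k, K k /\ F k & P k.
  have [k Kk Pk] := PK z Fz; exists k => //.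
  by apply/Pk; split => //; apply/BfW.
apply/seteqP; split=> [y|_ [x Fx <-]]; first by rewrite BW => -[].
have [k [Kk Fk] /iffRL Pk] := PK x Fx.
by apply/BfW => //; case: Pk => //; split => //=; rewrite (fK k k0).
Qed.

Section AdjoinPoint.
Variables (X : topologicalType) (K : set X).
Hypothesis cK : compact K.

Definition hyper_setU1 (x : X) : hyperspace X :=
  exist _ (K `|` [set x])
    (conj (compactU cK (@compact_set1 X x)) (ex_intro _ x (or_intror erefl))).

Lemma eq_hyper_setU1 k k' : K k -> K k' -> hyper_setU1 k = hyper_setU1 k'.
Proof.
move=> Kk Kk'; apply: hyperspace_ext => /=.
by apply/seteqP; split=> y [Ky | ->]; left.
Qed.

Lemma continuous_hyper_setU1 : continuous hyper_setU1.
Proof.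
apply: continuous_to_hyperspace => U oU.
- have [KU | nKU] := pselect (K `<=` U).
    suff -> : hyper_setU1 @^-1` vietoris_upper U = U by [].
    by apply/seteqP; split=> [x /(_ x (or_intror erefl)) | x Ux y [/KU | ->]].
  suff -> : hyper_setU1 @^-1` vietoris_upper U = set0 by exact: open0.
  by apply/seteqP; split=> // x KxU; apply: nKU => y Ky; apply: KxU; left.
- have [[k [Kk Uk]] | nKU] := pselect (K `&` U !=set0).
    suff -> : hyper_setU1 @^-1` vietoris_lower U = setT by exact: openT.
    by apply/seteqP; split=> // x _; exists k; split=> //; left.
  suff -> : hyper_setU1 @^-1` vietoris_lower U = U by [].
  apply/seteqP; split=> [x [y [[Ky | ->] Uy]] | x Ux] //.
    by case: nKU; exists y.
  by exists x; split=> //; right.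
Qed.

End AdjoinPoint.

Lemma connected_hyperspace_of_quasicomponents (X : topologicalType)
    (F K : set X) :
  compact K -> K `<` F -> (forall p, F p -> K `&` quasicomponent F p !=set0) ->
  exists C : set (hyperspace X),
    connected C /\ exists A B : hyperspace X, C A /\ C B /\ A <> B.
Proof.
move=> cK [KF nFK] FK.
have [p [Fp nKp]] : exists p, F p /\ ~ K p.
  apply: contrapT => nF; apply: nFK => x Fx.
  by apply: contrapT => nKx; apply: nF; exists x.
have [k [Kk _]] := FK p Fp.
exists (hyper_setU1 cK @` F); split.
  apply: connected_image_quasicomponents FK; first exact: continuous_hyper_setU1.
  exact: eq_hyper_setU1.
exists (hyper_setU1 cK k), (hyper_setU1 cK p).
split; first by exists k => //; exact: KF.
split; first by exists p.
move=> /(congr1 (@proj1_sig _ _)) /= kp.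
have : (K `|` [set k]) p by rewrite kp; right.
by case=> [//| pk]; apply: nKp; rewrite pk.
Qed.

Section ConnectedHyperspace.
Variables (X : topologicalType) (C : set (hyperspace X)).
Hypothesis connC : connected C.

Let F := closure (\bigcup_(D in C) proj1_sig D).

Let sub_F D : C D -> proj1_sig D `<=` F.
Proof. by move=> CD x Dx; apply: subset_closure; exists D. Qed.

Lemma connected_hyperspace_meets_quasicomponent M q : C M -> F q ->
  proj1_sig M `&` quasicomponent F q !=set0.
Proof.
move=> CM Fq.
apply: (compact_meets_quasicomponent (proj2_sig M).1 (sub_F CM) Fq).
move=> P [[W oW PW] [V cV PV]] Pq.
have WV D : C D -> proj1_sig D `&` W = proj1_sig D `&` V.
  by move=> CD; rewrite -(setIidl (sub_F CD)) -!setIA -PW -PV.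
pose S := C `&` vietoris_lower W.
have SC : S = C.
  apply: connC.
  - have Wq : W q by move: Pq; rewrite PW => -[].
    have [y [[D CD Dy] Wy]] := Fq W (open_nbhs_nbhs (conj oW Wq)).
    by exists D; split=> //; exists y.
  - by exists (vietoris_lower W) => //; exact: open_vietoris_lower.
  exists (~` vietoris_upper (~` V)).
    by apply/open_closedC/open_vietoris_upper/closed_openC.
  apply/seteqP; split=> D [CD DW]; split=> //; move: DW.
    by rewrite /vietoris_lower /= WV // => -[y [Dy Vy]] /(_ y Dy).
  rewrite /vietoris_lower /= WV // => DV.
  by apply: contrapT => nDV; apply: DV => y Dy Vy; apply: nDV; exists y.
have [_ [y [My Wy]]] : S M by rewrite SC.
by exists y; split=> //; rewrite PW; split=> //; exact: (sub_F CM).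
Qed.

Lemma quasicomponents_of_connected_hyperspace (A B : hyperspace X) :
  C A -> C B -> A <> B ->
  exists F K : set X,
    [/\ closed F, compact K, K `<` F &
        forall p, F p -> K `&` quasicomponent F p !=set0].
Proof.
move=> CA CB AB.
have [M [CM MF]] : exists M, C M /\ proj1_sig M <> F.
  have [AF | AF] := pselect (proj1_sig A = F); last by exists A.
  by exists B; split=> // BF; apply/AB/hyperspace_ext; rewrite AF BF.
exists F, (proj1_sig M); split.
- exact: closed_closure.
- exact: (proj2_sig M).1.
- split; first exact: sub_F.
  by move=> FM; apply/MF/seteqP; split=> //; exact: sub_F.
- by move=> p Fp; exact: connected_hyperspace_meets_quasicomponent.
Qed.

End ConnectedHyperspace.

Theorem proposition7p1 (X : topologicalType) :
  hausdorff_space X -> totally_disconnected [set: X] ->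
  ((exists C : set (hyperspace X),
       connected C /\ exists A B : hyperspace X, C A /\ C B /\ A <> B)
   <->
   (exists F K : set X,
       [/\ closed F, compact K, K `<` F &
           forall p, F p -> K `&` quasicomponent F p !=set0])).
Proof.
move=> _ _; split.
  move=> [C [connC [A [B [CA [CB AB]]]]]].
  exact: quasicomponents_of_connected_hyperspace CA CB AB.
move=> [F [K [_ cK KF FK]]].
exact: connected_hyperspace_of_quasicomponents KF FK.
Qed.
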